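(* For an integer $n>1$ define, for every integer $1<r<n$, $$E^{PD,P}_n(r)=\sum_{k=r+1}^{n}\left(1+\frac{k}{n}\right)\frac{r}{(k-1)k}\frac{\binom{k}{2}}{\binom{n}{2}}=\frac{r(n-r)(3n+1+r)}{2n^2(n-1)},$$ and let $\mathcal{M}(n)$ be a value of $r$ at which $E^{PD,P}_n$ attains its maximum. Then (i) $\lim_{n\to\infty}\mathcal{M}(n)/n=\dfrac{\sqrt{13}-2}{3}=0.53518\dots$; (ii) $\lim_{n\to\infty}E^{PD,P}_n(\mathcal{M}(n))=\dfrac{13\sqrt{13}-35}{27}=0.4397\dots$.
   Context: $E^{PD,P}_n(r)$ is the expected payoff, in the Postdoc secretary problem (goal: select the overall second best of $n$ randomly ordered candidates) with payoff $1+k/n$ when the accepted $k$-th candidate is the overall second best, of the strategy that rejects the first $r$ candidates and then accepts the first candidate which is second best among those seen so far. *)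

From HB Require Import structures.
From mathcomp Require Import all_boot all_order all_algebra.
From mathcomp Require Import all_classical all_reals all_analysis.
Set Implicit Arguments. Unset Strict Implicit. Unset Printing Implicit Defensive.
Import Order.TTheory GRing.Theory Num.Theory.
Local Open Scope ring_scope.

(* Expected payoff E^{PD,P}_n(r) of the Postdoc rule (reject the first r,
   then accept the first relatively-second-best), as defined by the sum
   sum_{k=r+1}^n (1 + k/n) * r/((k-1)k) * C(k,2)/C(n,2). *)
Definition EPDP (R : realType) (n r : nat) : R :=
  \sum_(r.+1 <= k < n.+1)
     (1 + k%:R / n%:R) * (r%:R / ((k%:R - 1) * k%:R))
       * ('C(k, 2)%:R / 'C(n, 2)%:R).

Definition is_maximizer (R : realType) (M : nat -> nat) : Prop :=
  forall n : nat, (2 < n)%N ->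
    (1 < M n < n)%N /\
    forall r : nat, (1 < r < n)%N -> EPDP R n r <= EPDP R n (M n).

From HB Require Import structures.
From mathcomp Require Import all_boot all_order all_algebra.
From mathcomp Require Import all_classical all_reals all_analysis.
From mathcomp Require Import ring lra zify.
Import Order.TTheory GRing.Theory Num.Theory numFieldNormedType.Exports.
Set Implicit Arguments.
Unset Strict Implicit.
Local Open Scope classical_set_scope.
Local Open Scope ring_scope.

(* Writing x = r/n and t = 1/n, the closed form of E_n(r) is
   x (1 - x) (3 + x + t) / (2 (1 - t)), a perturbation of size O(t) of g(x)/2 with
   g(x) = x (1 - x) (3 + x).  On [0, 1], g is maximal at the root a = (sqrt 13 - 2)/3
   of g'(x) = 3 - 4x - 3x^2, and g(a) - g(x) = (x - a)^2 (x + 2 + 2a) grows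
   quadratically.  Comparing M(n) with the admissible competitor floor(a n) gives
   (M(n)/n - a)^2 <= 1/n and (E_n(M(n)) - g(a)/2)^2 <= 1/n. *)

Lemma bin2_mul2 k : ('C(k, 2) * 2 = k * k.-1)%N.
Proof. by rewrite mulnC -mul_bin_diag bin1. Qed.

Section Payoff.
Variable R : realType.

Lemma natr_bin2 k : ('C(k, 2)%:R : R) = k%:R * (k%:R - 1) / 2.
Proof.
apply: (@mulIf _ 2); first by rewrite pnatr_eq0.
rewrite -natrM bin2_mul2 natrM mulfVK ?pnatr_eq0 //.
by case: k => [|k]; rewrite ?mul0r // -subn1 natrB.
Qed.

Lemma sum_1_add_natr_div (c : R) (r m : nat) : c != 0 -> (r <= m)%N ->
  \sum_(r.+1 <= k < m.+1) (1 + k%:R / c) =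
    (m%:R - r%:R) + (m%:R * (m%:R + 1) - r%:R * (r%:R + 1)) / (2 * c).
Proof.
move=> c0; elim: m => [|m IH].
  by rewrite leqn0 => /eqP ->; rewrite big_geq //; field.
rewrite leq_eqVlt => /orP [/eqP ->|]; first by rewrite big_geq //; field.
by rewrite ltnS => rm; rewrite big_nat_recr //= IH // -addn1 natrD; field.
Qed.

Lemma EPDP_closed (n r : nat) : (0 < r)%N -> (r <= n)%N -> (1 < n)%N ->
  EPDP R n r = r%:R * (n%:R - r%:R) * (3 * n%:R + 1 + r%:R) / (2 * n%:R ^+ 2 * (n%:R - 1)).
Proof.
move=> r0 rn n1; rewrite /EPDP.
have n0 : n%:R != 0 :> R by rewrite pnatr_eq0; lia.
have n1' : n%:R - 1 != 0 :> R by rewrite subr_eq0 pnatr_eq1; lia.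
(* r / ((k - 1) k) * C(k, 2) / C(n, 2) = r / (n (n - 1)) does not depend on k *)
rewrite (eq_big_nat _ _ (F2 := fun k => (1 + k%:R / n%:R) * (r%:R / (n%:R * (n%:R - 1))))).
  by rewrite -mulr_suml sum_1_add_natr_div //; field; rewrite n0 n1'.
move=> k /andP [rk kn].
have k0 : k%:R != 0 :> R by rewrite pnatr_eq0; lia.
have k1 : k%:R - 1 != 0 :> R by rewrite subr_eq0 pnatr_eq1; lia.
by rewrite !natr_bin2; field; rewrite n0 n1' k0 k1.
Qed.

Definition pd_shape (t x : R) : R := x * (1 - x) * (3 + x + t).

Lemma EPDP_shape (n r : nat) : (0 < r)%N -> (r <= n)%N -> (1 < n)%N ->
  EPDP R n r = pd_shape n%:R^-1 (r%:R / n%:R) / (2 * (1 - n%:R^-1)).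
Proof.
move=> r0 rn n1; rewrite EPDP_closed // /pd_shape.
have n0 : n%:R != 0 :> R by rewrite pnatr_eq0; lia.
have n1' : n%:R - 1 != 0 :> R by rewrite subr_eq0 pnatr_eq1; lia.
by field; rewrite n0 n1'.
Qed.

Lemma pd_shapeE t x : pd_shape t x = pd_shape 0 x + t * (x * (1 - x)).
Proof. by rewrite /pd_shape; ring. Qed.

Lemma mul_subr1_itv (x : R) : 0 <= x <= 1 -> 0 <= x * (1 - x) <= 1/4.
Proof.
move=> /andP [x0 x1]; apply/andP; split; first by apply: mulr_ge0; lra.
have : 0 <= (x - 1/2) ^+ 2 := sqr_ge0 _.
have -> : x * (1 - x) = 1/4 - (x - 1/2) ^+ 2 by field.
lra.
Qed.

Section Optimum.
Variable a : R.
Hypothesis a_crit : 3 * a ^+ 2 + 4 * a = 3.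
Hypothesis a_itv : 1/2 < a < 1.

Lemma pd_shape0_gap x : pd_shape 0 a - pd_shape 0 x = (x - a) ^+ 2 * (x + 2 + 2 * a).
Proof.
have -> : pd_shape 0 a - pd_shape 0 x =
    (x - a) ^+ 2 * (x + 2 + 2 * a) + (x - a) * (3 * a ^+ 2 + 4 * a - 3).
  by rewrite /pd_shape; ring.
by rewrite a_crit subrr mulr0 addr0.
Qed.

Lemma pd_shape0_opt_itv : 0 <= pd_shape 0 a <= 1.
Proof.
have /andP [a_gt a_lt1] := a_itv.
have /andP [u0 u1] : 0 <= a * (1 - a) <= 1/4.
  by apply: mul_subr1_itv; apply/andP; split; lra.
by rewrite /pd_shape addr0; apply/andP; split; nra.
Qed.

Lemma pd_shape_lower t y : 0 <= y <= 1 -> a - t < y <= a ->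
  pd_shape 0 a - 5 * t ^+ 2 <= pd_shape t y.
Proof.
have /andP [a_gt a_lt1] := a_itv.
move=> y01 /andP [ty ya].
have /andP [u0 _] := mul_subr1_itv y01; case/andP: y01 => y0 y1.
have : (y - a) ^+ 2 * (y + 2 + 2 * a) <= t ^+ 2 * 5.
  apply: ler_pM; [exact: sqr_ge0 | lra | nra | lra].
have t0 : 0 < t by lra.
have := pd_shape0_gap y; rewrite [pd_shape t y]pd_shapeE; nra.
Qed.

Lemma pd_shape_upper t x : 0 <= t -> 0 <= x <= 1 ->
  pd_shape t x <= pd_shape 0 a - 2 * (x - a) ^+ 2 + t / 4.
Proof.
have /andP [a_gt a_lt1] := a_itv.
move=> t0 x01.
have /andP [_ u1] := mul_subr1_itv x01; case/andP: x01 => x0 x1.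
have : 0 <= (x - a) ^+ 2 * (x + 2 * a) by apply: mulr_ge0; [exact: sqr_ge0 | lra].
have := pd_shape0_gap x; rewrite [pd_shape t x]pd_shapeE; nra.
Qed.

Lemma pd_shape_argmax_near t x y : 0 < t <= 1/4 -> 0 <= x <= 1 -> 0 <= y <= 1 ->
  a - t < y <= a -> pd_shape t y <= pd_shape t x ->
  (x - a) ^+ 2 <= t /\ (pd_shape t x / (2 * (1 - t)) - pd_shape 0 a / 2) ^+ 2 <= t.
Proof.
move=> /andP [t0 t4] x01 y01 ya yx.
have lo := pd_shape_lower y01 ya.
have up := pd_shape_upper (ltW t0) x01.
have tt : t ^+ 2 <= t / 4 by rewrite expr2; nra.
have xa2 := sqr_ge0 (x - a).
split; first lra.
have /andP [g0 g1] := pd_shape0_opt_itv.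
set d := pd_shape t x - pd_shape 0 a * (1 - t).
have dt : `|d| <= 5/4 * t.
  rewrite ler_norml /d; apply/andP; split; nra.
have -> : pd_shape t x / (2 * (1 - t)) - pd_shape 0 a / 2 = d / (2 * (1 - t)).
  by rewrite /d; field; lra.
have q0 : 0 < 2 * (1 - t) by lra.
have dq : `|d / (2 * (1 - t))| <= t.
  rewrite normrM [`|_^-1|]gtr0_norm ?invr_gt0 // ler_pdivrMr //; nra.
have := normr_ge0 (d / (2 * (1 - t))).
by rewrite -real_normK ?num_real // expr2; nra.
Qed.

End Optimum.

Lemma cvg_sqr_dist_le_inv (u : nat -> R) (l : R) (N0 : nat) :
  (forall n, (N0 <= n)%N -> (u n - l) ^+ 2 <= n%:R^-1) -> u @ \oo --> l.
Proof.
move=> hu; apply/cvgrPdist_lt => e e0.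
have e20 : 0 < e ^+ 2 by rewrite exprn_gt0.
near=> n.
have Nn : (N0 <= n)%N by near: n; exact: nbhs_infty_ge.
have ne : (e ^+ 2)^-1 < n%:R by near: n; exact: nbhs_infty_gtr.
have n0 : 0 < n%:R :> R by apply: lt_trans ne; rewrite invr_gt0.
have ne' : n%:R^-1 < e ^+ 2 by rewrite -[e ^+ 2]invrK ltf_pV2 // posrE invr_gt0.
have := le_lt_trans (hu n Nn) ne'.
by rewrite distrC ltr_norml => ?; apply/andP; split; nra.
Unshelve. all: by end_near.
Qed.

Section Maximizer.
Variables (M : nat -> nat) (a : R).
Hypothesis M_max : is_maximizer R M.
Hypothesis a_crit : 3 * a ^+ 2 + 4 * a = 3.
Hypothesis a_itv : 1/2 < a < 1.

Lemma maximizer_sqr_dist_le n : (4 <= n)%N ->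
  ((M n)%:R / n%:R - a) ^+ 2 <= n%:R^-1 /\
  (EPDP R n (M n) - pd_shape 0 a / 2) ^+ 2 <= n%:R^-1.
Proof.
have /andP [a_gt a_lt1] := a_itv.
move=> n4; have n2 : (2 < n)%N by lia.
have [/andP [m1 mn] Mmax] := M_max n2.
set N : R := n%:R.
have N4 : 4 <= N by rewrite /N (ler_nat R 4 n).
have aN0 : 0 <= a * N by apply: mulr_ge0; lra.
set r := Num.truncn (a * N).
have /andP [rlo rhi] := truncn_itv aN0.
have r1n : (1 < r < n)%N.
  apply/andP; split; rewrite -(ltr_nat R); first by nra.
  by rewrite -/N; nra.
have := Mmax r r1n; rewrite !EPDP_shape; try lia.
have N0 : N != 0 by rewrite gt_eqF //; lra.
have t01 : 0 < N^-1 <= 1/4.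
  by rewrite invr_gt0 (_ : 1/4 = 4^-1) ?lef_pV2 ?posrE ?andbT //=; lra.
have Nt : N^-1 * N = 1 by rewrite mulVf.
have mN : (M n)%:R <= N by rewrite ler_nat; lia.
have rN : r%:R <= N by rewrite ler_nat; lia.
have x01 : 0 <= (M n)%:R / N <= 1 by rewrite divr_ge0 //= ler_pdivrMr ?mul1r //; lra.
have y01 : 0 <= r%:R / N <= 1 by rewrite divr_ge0 //= ler_pdivrMr ?mul1r //; lra.
have ya : a - N^-1 < r%:R / N <= a.
  have rNN : r%:R / N * N = r%:R by rewrite mulfVK.
  by apply/andP; split; nra.
rewrite -/N ler_pM2r ?invr_gt0; last lra.
by move=> /(pd_shape_argmax_near a_crit a_itv t01 x01 y01 ya).
Qed.

End Maximizer.

End Payoff.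

Theorem theorem10 (R : realType) (M : nat -> nat) :
  is_maximizer R M ->
  ((fun n : nat => (M n)%:R / n%:R : R) @ \oo --> ((Num.sqrt 13 - 2) / 3 : R)) /\
  ((fun n : nat => EPDP R n (M n)) @ \oo --> ((13 * Num.sqrt 13 - 35) / 27 : R)).
Proof.
move=> M_max.
have s0 : 0 <= Num.sqrt (13 : R) := sqrtr_ge0 _.
have s2 : Num.sqrt (13 : R) ^+ 2 = 13 by rewrite sqr_sqrtr.
set s := Num.sqrt (13 : R) in s0 s2 *.
set a := (s - 2) / 3.
have a_crit : 3 * a ^+ 2 + 4 * a = 3.
  have -> : 3 * a ^+ 2 + 4 * a = (s ^+ 2 - 4) / 3 by rewrite /a; field.
  by rewrite s2; field.
have s_itv : 7/2 < s < 5 by apply/andP; split; nra.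
have a_itv : 1/2 < a < 1 by rewrite /a; apply/andP; split; lra.
have opt_value : pd_shape 0 a / 2 = (13 * s - 35) / 27.
  apply/eqP; rewrite -subr_eq0.
  have -> : pd_shape 0 a / 2 - (13 * s - 35) / 27 = - (s * (s ^+ 2 - 13)) / 54.
    by rewrite /pd_shape /a; field.
  by rewrite s2 subrr mulr0 oppr0 mul0r.
have near_opt := maximizer_sqr_dist_le M_max a_crit a_itv.
split; apply: (@cvg_sqr_dist_le_inv R _ _ 4%N) => n /near_opt [] //.
by rewrite opt_value.
Qed.
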